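(* Let $M\geq 1$, $P=4M-3$, and let $x\in\ell(\mathbb{Z}_P)$ satisfy $x[p]=0$ for all $p=M,\ldots,4M-4$. Then for all $p=1,\ldots,2M-2$, $$\operatorname{CirAut}(x+Rx)[p]=\begin{cases}\displaystyle 2\operatorname{Re}\Big(\sum_{p'=\frac{p+1}{2}}^{M-1}x[p']\big(\overline{x[p'-p]}+\overline{x[p-p']}\big)\Big) & \text{if } p \text{ is odd},\\[2ex] \displaystyle 2\operatorname{Re}\Big(\sum_{p'=\frac{p}{2}+1}^{M-1}x[p']\big(\overline{x[p'-p]}+\overline{x[p-p']}\big)\Big)+\big|x[\tfrac{p}{2}]\big|^2 & \text{if } p \text{ is even},\end{cases}$$ where indices of $x$ are interpreted modulo $P$.
   Context: $\ell(\mathbb{Z}_P)$ denotes the space of $P$-periodic functions $u\colon\mathbb{Z}\to\mathbb{C}$, with inner product $\langle u,v\rangle=\sum_{p\in\mathbb{Z}_P}u[p]\overline{v[p]}$. The translation operator is $(T^pu)[p']:=u[p'-p]$ and the reversal operator is $(Ru)[p]:=u[-p]$. The circular autocorrelation is $\operatorname{CirAut}(u)[p]:=\langle u,T^pu\rangle=\sum_{p'\in\mathbb{Z}_P}u[p']\overline{u[p'-p]}$. *)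

From HB Require Import structures.
From mathcomp Require Import all_boot all_order all_algebra.
From mathcomp Require Import complex.
From mathcomp Require Import reals.
Set Implicit Arguments. Unset Strict Implicit. Unset Printing Implicit Defensive.
Import Order.TTheory GRing.Theory Num.Theory.
Local Open Scope ring_scope.

(* Elements of l(Z_P) are modelled as functions int -> C that are P-periodic. *)
Definition periodic (C : Type) (P : nat) (u : int -> C) : Prop :=
  forall p : int, u (p + P%:Z) = u p.

Definition rev_op (C : Type) (u : int -> C) : int -> C := fun p => u (- p).

Definition CirAut (C : numClosedFieldType) (P : nat) (u : int -> C) (p : int) : C :=
  \sum_(i < P) u (i%:Z) * (u (i%:Z - p))^*.

From mathcomp Require Import zify ring.
From mathcomp Require Import all_boot all_order all_algebra complex reals.
Import GRing.Theory Num.Theory.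
Local Open Scope ring_scope.

(* Expanding CirAut(x + Rx) gives the autocorrelations of x and Rx and the two
   cross-correlations. Modulo P = 4M-3, x is supported on {0,...,M-1} and vanishes on the
   gap {-(3M-3),...,-1}, which is wide enough for 1 <= p <= 2M-2 to kill
   <Rx, T^p x> = <x, T^(-p) Rx>.  The autocorrelation of Rx at p is that of x at -p, i.e.
   the conjugate of CirAut(x)[p]; and <x, T^p Rx> = sum_(i <= p) x[i] conj(x[p-i]) is a
   palindromic sum (its i-th and (p-i)-th terms are conjugate), so it folds into twice the
   real part of its upper half plus, for even p, the middle term |x[p/2]|^2. *)

Lemma big_nat_trunc (V : nmodType) (m n k : nat) (F : nat -> V) :
  (m <= n <= k)%N -> (forall i, (n <= i < k)%N -> F i = 0) ->
  \sum_(m <= i < k) F i = \sum_(m <= i < n) F i.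
Proof.
move=> /andP[mn nk] F0; rewrite (@big_cat_nat _ _ _ n m k _ _ mn nk) /=.
rewrite [X in _ + X]big1_seq ?addr0 //.
by move=> i /andP[_]; rewrite mem_index_iota => /F0.
Qed.

Section PeriodicFunctions.
Context {T : Type} {P : nat}.

Lemma periodicB {u : int -> T} : periodic P u -> forall q : int, u (q - P%:Z) = u q.
Proof. by move=> uP q; rewrite -uP subrK. Qed.

Lemma periodic_shift {u : int -> T} (a : int) :
  periodic P u -> periodic P (fun q => u (q + a)).
Proof. by move=> uP q; rewrite addrAC uP. Qed.

Lemma periodic_rev {u : int -> T} : periodic P u -> periodic P (rev_op u).
Proof. by move=> uP q; rewrite /rev_op -(periodicB uP (- q)) opprD. Qed.

Lemma periodic_reflect {u : int -> T} (a : int) :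
  periodic P u -> periodic P (fun q => u (a - q)).
Proof. by move=> uP q; rewrite -(periodicB uP (a - q)) opprD addrA. Qed.

End PeriodicFunctions.

Section PeriodicSums.
Context {V : nmodType} {P : nat}.

Lemma sum_periodic_shift1 (f : int -> V) : periodic P f ->
  \sum_(i < P) f (i%:Z + 1) = \sum_(i < P) f i%:Z.
Proof.
case: P => [|n] fP; first by rewrite !big_ord0.
rewrite big_ord_recr big_ord_recl /= addrC (_ : n%:Z + 1 = 0 + n.+1); last lia.
by congr (_ + _); [exact: (fP 0) | apply: eq_bigr => i _; rewrite /bump /= add1n addrC].
Qed.

Lemma sum_periodic_shift (f : int -> V) (a : int) : periodic P f ->
  \sum_(i < P) f (i%:Z + a) = \sum_(i < P) f i%:Z.
Proof.
move=> fP; elim/int_rec: a => [|n IHn|n IHn]; first by under eq_bigr do rewrite addr0.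
- rewrite -{}IHn -(@sum_periodic_shift1 (fun q => f (q + n))) => [|q].
    by apply: eq_bigr => i _; congr f; lia.
  by rewrite [q + _ + _]addrAC fP.
- rewrite -{}IHn -(@sum_periodic_shift1 (fun q => f (q - n.+1%:Z))) => [|q].
    by apply: eq_bigr => i _; congr f; lia.
  by rewrite [q + _ - _]addrAC fP.
Qed.

Lemma sum_periodic_reflect (f : int -> V) : periodic P f ->
  \sum_(i < P) f (- i%:Z) = \sum_(i < P) f i%:Z.
Proof.
move=> fP; rewrite -(sum_periodic_shift f 1 fP) (reindex_inj rev_ord_inj) /=.
apply: eq_bigr => i _; rewrite -[RHS](periodicB fP); congr (f _); have := ltn_ord i; lia.
Qed.

End PeriodicSums.

Lemma mul2Re (C : numClosedFieldType) (z : C) : 2 * 'Re z = z + z^*.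
Proof. by rewrite ReE mulrC divfK ?pnatr_eq0. Qed.

Section Correlation.
Context {C : numClosedFieldType} {P : nat}.

Definition CirCorr (u v : int -> C) (p : int) : C :=
  \sum_(i < P) u i%:Z * (v (i%:Z - p))^*.

Lemma periodic_corr_term {u v : int -> C} :
  periodic P u -> periodic P v -> periodic P (fun q => u q * (v q)^*).
Proof. by move=> uP vP q; rewrite uP vP. Qed.

Lemma CirAutD (u v : int -> C) (p : int) :
  CirAut P (fun q => u q + v q) p =
  CirAut P u p + CirCorr u v p + CirCorr v u p + CirAut P v p.
Proof.
rewrite /CirAut /CirCorr -!big_split; apply: eq_bigr => i _ /=.
by rewrite rmorphD /= mulrDl !mulrDr !addrA.
Qed.

Lemma CirCorr_revl {u v : int -> C} (p : int) : periodic P u -> periodic P v ->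
  CirCorr (rev_op u) v p = CirCorr u (rev_op v) (- p).
Proof.
move=> uP vP; pose f q := u q * (v (- p - q))^*.
have fP : periodic P f by exact: periodic_corr_term uP (periodic_reflect (- p) vP).
transitivity (\sum_(i < P) f (- i%:Z)).
  by apply: eq_bigr => i _; rewrite /f opprK addrC.
by rewrite (sum_periodic_reflect f fP); apply: eq_bigr => i _; rewrite /rev_op opprB.
Qed.

Lemma CirAut_rev {u : int -> C} (p : int) : periodic P u ->
  CirAut P (rev_op u) p = CirAut P u (- p).
Proof.
move=> uP; rewrite [LHS](CirCorr_revl p uP (periodic_rev uP)).
by apply: eq_bigr => i _; rewrite /rev_op opprK.
Qed.

Lemma CirAutN {u : int -> C} (p : int) : periodic P u ->
  CirAut P u (- p) = (CirAut P u p)^*.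
Proof.
move=> uP; pose f q := u (q - p) * (u q)^*.
have fP : periodic P f by exact: periodic_corr_term (periodic_shift (- p) uP) uP.
transitivity (\sum_(i < P) f (i%:Z + p)).
  by apply: eq_bigr => i _; rewrite /f addrK opprK mulrC.
rewrite (sum_periodic_shift f p fP) /CirAut rmorph_sum.
by apply: eq_bigr => i _; rewrite rmorphM /= conjCK mulrC.
Qed.

End Correlation.

Section PalindromicSums.
Context {C : numClosedFieldType} (p : nat) (G : nat -> C).
Hypothesis G_sym : forall i, (i <= p)%N -> G (p - i)%N = (G i)^*.

Lemma sum_mirror (k l : nat) : (k + l = p.+1)%N ->
  \sum_(0%N <= i < k) G i = (\sum_(l <= i < p.+1) G i)^*.
Proof.
move=> klp; rewrite -[l]add0n big_addn (_ : p.+1 - l = k)%N; last lia.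
rewrite rmorph_sum [LHS]big_nat_rev /=.
by apply: eq_big_nat => i /andP[_ ik]; rewrite -G_sym; [congr G |]; lia.
Qed.

Lemma sum_palindromic :
  \sum_(0%N <= i < p.+1) G i =
  2 * 'Re (\sum_(p./2.+1 <= i < p.+1) G i) + (if odd p then 0 else G p./2).
Proof.
have p_half : p = (p./2 + p./2 + odd p)%N by rewrite addnn addnC odd_double_half.
move: p_half; case: (odd p); set h := p./2 => p_half; clearbody h.
- transitivity (\sum_(0%N <= i < h.+1) G i + \sum_(h.+1 <= i < p.+1) G i).
    by apply: big_cat_nat; lia.
  by rewrite (@sum_mirror h.+1 h.+1) ?mul2Re ?addr0 1?addrC //; lia.
- transitivity (\sum_(0%N <= i < h) G i + (G h + \sum_(h.+1 <= i < p.+1) G i)).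
    by rewrite -big_ltn; [apply: big_cat_nat |]; lia.
  by rewrite (@sum_mirror h h.+1) ?mul2Re; [ring | lia].
Qed.

End PalindromicSums.

Section SupportedSignal.
Context {C : numClosedFieldType} {P M : nat} {x : int -> C}.
Hypotheses (x_periodic : periodic P x)
  (x_eq0 : forall q : int, M%:Z <= q < P%:Z -> x q = 0)
  (M_le_P : (M <= P)%N).

Lemma supported_eq0_neg (q : int) : M%:Z - P%:Z <= q < 0 -> x q = 0.
Proof. by move=> /andP[q_ge q_lt]; rewrite -x_periodic x_eq0 //; apply/andP; split; lia. Qed.

Lemma sum_supported (g : int -> C) :
  \sum_(i < P) x i%:Z * g i%:Z = \sum_(0%N <= i < M) x i%:Z * g i%:Z.
Proof.
rewrite -(big_mkord xpredT (fun i : nat => x i%:Z * g i%:Z)) (@big_nat_trunc _ 0 M) //.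
by move=> i /andP[Mi iP]; rewrite x_eq0 ?mul0r //; apply/andP; split; lia.
Qed.

Lemma CirAut_supported (lo p : nat) : (lo <= p)%N -> (lo <= M)%N -> (p + M <= P)%N ->
  CirAut P x p%:Z = \sum_(lo <= i < M) x i%:Z * (x (i%:Z - p%:Z))^*.
Proof.
move=> lo_p lo_M pMP; rewrite /CirAut (sum_supported (fun q => (x (q - p%:Z))^*)).
rewrite (@big_cat_nat _ _ _ lo) //=.
rewrite [X in X + _]big1_seq ?add0r // => i /andP[_]; rewrite mem_index_iota => /andP[_ i_lo].
by rewrite (@supported_eq0_neg (i%:Z - p%:Z)) ?conjC0 ?mulr0 //; apply/andP; split; lia.
Qed.

Lemma sum_conv_supported (lo p : nat) :
  (lo <= M)%N -> (lo <= p.+1)%N -> (p < P)%N -> (2 * M <= P + p + 1)%N ->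
  \sum_(lo <= i < M) x i%:Z * (x (p%:Z - i%:Z))^* =
  \sum_(lo <= i < p.+1) x i%:Z * (x (p%:Z - i%:Z))^*.
Proof.
move=> lo_M lo_p pP MP.
have vanish i : (minn M p.+1 <= i < maxn M p.+1)%N ->
    x i%:Z * (x (p%:Z - i%:Z))^* = 0.
  case: (ltnP i M) => iM /andP[ge_min lt_max].
    by rewrite (@supported_eq0_neg (p%:Z - i%:Z)) ?conjC0 ?mulr0 //; apply/andP; split; lia.
  by rewrite x_eq0 ?mul0r //; apply/andP; split; lia.
rewrite (@big_nat_trunc _ lo (minn M p.+1) M) => [|| i ?]; [|lia| apply: vanish; lia].
by rewrite (@big_nat_trunc _ lo (minn M p.+1) p.+1) => [|| i ?] //; [lia | apply: vanish; lia].
Qed.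

Lemma CirCorr_rev_supported (p : nat) : (p < P)%N -> (2 * M <= P + p + 1)%N ->
  CirCorr (P := P) x (rev_op x) p%:Z =
  \sum_(0%N <= i < p.+1) x i%:Z * (x (p%:Z - i%:Z))^*.
Proof.
move=> pP MP; rewrite /CirCorr (sum_supported (fun q => (rev_op x (q - p%:Z))^*)).
rewrite -sum_conv_supported //.
by apply: eq_big_nat => i _; rewrite /rev_op opprB.
Qed.

Lemma CirCorr_rev_supported_neg (p : nat) : (0 < p)%N -> (p + 2 * M <= P + 1)%N ->
  CirCorr (P := P) x (rev_op x) (- p%:Z) = 0.
Proof.
move=> p_gt0 pMP; rewrite /CirCorr (sum_supported (fun q => (rev_op x (q - - p%:Z))^*)).
rewrite big1_seq // => i /andP[_]; rewrite mem_index_iota => /andP[_ iM].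
rewrite /rev_op (@supported_eq0_neg (- (i%:Z - - p%:Z))) ?conjC0 ?mulr0 //.
by apply/andP; split; lia.
Qed.

End SupportedSignal.

Theorem theorem2 (R : realType) (M : nat) (x : int -> R[i]) :
  (1 <= M)%N ->
  periodic (4 * M - 3) x ->
  (forall p : int, (M%:Z <= p <= (4 * M - 4)%:Z) -> x p = 0) ->
  forall p : nat, (1 <= p <= 2 * M - 2)%N ->
    CirAut (4 * M - 3) (fun q => x q + rev_op x q) p%:Z =
    if odd p then
      2 * 'Re (\sum_(p.+1./2 <= p' < M)
                 x p'%:Z * ((x (p'%:Z - p%:Z))^* + (x (p%:Z - p'%:Z))^*))
    else
      2 * 'Re (\sum_((p./2).+1 <= p' < M)
                 x p'%:Z * ((x (p'%:Z - p%:Z))^* + (x (p%:Z - p'%:Z))^*))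
      + `|x (p./2)%:Z| ^+ 2.
Proof.
move=> M_ge1 x_periodic x_vanish p /andP[p_ge1 p_le].
set P := (4 * M - 3)%N in x_periodic *.
have x_eq0 (q : int) : M%:Z <= q < P%:Z -> x q = 0.
  by move=> /andP[? ?]; apply: x_vanish; apply/andP; split; lia.
have M_le_P : (M <= P)%N by lia.
rewrite CirAutD (CirCorr_revl _ x_periodic x_periodic).
rewrite (CirCorr_rev_supported_neg x_periodic x_eq0 M_le_P) //; last lia.
rewrite (CirAut_rev _ x_periodic) (CirAutN _ x_periodic).
rewrite (CirCorr_rev_supported x_periodic x_eq0 M_le_P); [| lia | lia].
pose G i := x i%:Z * (x (p%:Z - i%:Z))^*.
have G_sym i : (i <= p)%N -> G (p - i)%N = (G i)^*.
  by move=> ip; rewrite /G -subzn // subKr rmorphM /= conjCK mulrC.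
rewrite addr0 (@sum_palindromic _ p G G_sym).
set lo := p./2.+1.
have sum_split :
    \sum_(lo <= i < M) x i%:Z * ((x (i%:Z - p%:Z))^* + (x (p%:Z - i%:Z))^*) =
    CirAut P x p + \sum_(lo <= i < p.+1) G i.
  rewrite (CirAut_supported x_periodic x_eq0 M_le_P lo p); [| lia | lia | lia].
  rewrite -(sum_conv_supported x_periodic x_eq0 M_le_P); [| lia | lia | lia | lia].
  by rewrite -big_split; apply: eq_bigr => i _; rewrite mulrDr.
have [p_odd | p_even] := boolP (odd p).
- have -> : p.+1./2 = lo by rewrite -[p.+1./2]/(uphalf p) uphalf_half p_odd.
  by rewrite sum_split !mul2Re rmorphD /=; ring.
- have G_mid : G p./2 = `|x p./2%:Z| ^+ 2.
    have := odd_double_half p; rewrite (negbTE p_even) add0n -addnn => p_eq.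
    by rewrite /G normCK (_ : p%:Z - p./2%:Z = p./2%:Z) //; lia.
  by rewrite sum_split G_mid !mul2Re rmorphD /=; ring.
Qed.
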